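(* Let $x,y\in V(D^+)$ with $y\prec x$ and $y\in F$. Then $g(x,u)>g^*(y)$ for every $u\prec y$.
   Context: $G=(V,E,w)$ is a simple, connected, undirected graph with positive edge lengths, $s,t\in V$, $d(\cdot,\cdot)$ the shortest path distance in $G$. $D$ is the union of all shortest $st$-paths of $G$, and $D^+$ is the directed acyclic graph obtained from $D$ by orienting every edge toward $t$. $x\prec y$ means $x$ is an ancestor of $y$ in $D^+$ (a directed path of positive length from $x$ to $y$ exists). For $x\neq s$, $v\neq x$ is an $s$-dominator of $x$ if every directed path from $s$ to $x$ in $D^+$ contains $v$, and $I_s(x)$ is the $s$-dominator of $x$ closest to $x$ (every other $s$-dominator of $x$ is an $s$-dominator of $I_s(x)$). Symmetrically, for $x\neq t$, $v\neq x$ is a $t$-dominator of $x$ if every directed path from $x$ to $t$ in $D^+$ contains $v$, and $I_t(x)$ is the $t$-dominator closest to $x$. For $x\neq s$, $C(x)=\{v: I_s(x)\prec v\prec x\}$. For $x\neq s$ and $y\in V(D^+)$, $g(x,y)=d(y,x)$ if $y\in C(x)$ and $x\prec I_t(y)$, and $g(x,y)=\infty$ otherwise; $g^*(x)=\min_y g(x,y)$. $F=\{x\in V(D^+)\setminus\{s\}: g^*(x)\neq\infty\}$. *)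

From HB Require Import structures.
From mathcomp Require Import all_boot all_order all_algebra.
From mathcomp Require Import reals constructive_ereal.
From Stdlib Require Import ClassicalEpsilon Relations.
Set Implicit Arguments. Unset Strict Implicit. Unset Printing Implicit Defensive.
Import Order.TTheory GRing.Theory Num.Theory.
Local Open Scope ring_scope.

Section SPDefs.
Variables (R : realType) (T : finType) (e : rel T) (w : T -> T -> R)
  (d : T -> T -> R) (s t : T).

Fixpoint wlen (u : T) (p : seq T) : R :=
  match p with [::] => 0 | v :: p' => w u v + wlen v p' end.

Definition walk (u : T) (p : seq T) (v : T) : bool :=
  path e u p && (last u p == v).

Definition shortest_dist : Prop :=
  forall u v, (exists p, walk u p v /\ wlen u p = d u v) /\
              (forall p, walk u p v -> d u v <= wlen u p).

Definition sp_walk (p : seq T) : Prop := walk s p t /\ wlen s p = d s t.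

(* vertex set of D (= of D^+) *)
Definition inD (x : T) : Prop := exists p, sp_walk p /\ x \in s :: p.

(* arcs of D^+: edges of shortest st-paths, oriented toward t *)
Definition arc (u v : T) : Prop :=
  exists p p1 p2, sp_walk p /\ s :: p = p1 ++ u :: v :: p2.

Definition prec (x y : T) : Prop := clos_trans T arc x y.

Fixpoint dwalk (x : T) (p : seq T) : Prop :=
  match p with [::] => True | y :: p' => arc x y /\ dwalk y p' end.

Definition sdom (x v : T) : Prop :=
  v <> x /\ forall p, dwalk s p -> last s p = x -> v \in s :: p.

Definition tdom (x v : T) : Prop :=
  v <> x /\ forall p, dwalk x p -> last x p = t -> v \in x :: p.

Definition is_Is (x v : T) : Prop :=
  sdom x v /\ forall v', sdom x v' -> v' <> v -> sdom v v'.
Definition is_It (x v : T) : Prop :=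
  tdom x v /\ forall v', tdom x v' -> v' <> v -> tdom v v'.

Definition Is (x : T) : T := epsilon (inhabits x) (is_Is x).
Definition It (x : T) : T := epsilon (inhabits x) (is_It x).

Definition inC (x v : T) : Prop := prec (Is x) v /\ prec v x.

Definition g (x y : T) : \bar R :=
  if excluded_middle_informative (inC x y /\ prec x (It y))
  then (d y x)%:E else +oo%E.

Definition gstar (x : T) : \bar R := \big[Order.min/+oo%E]_(y : T) g x y.

Definition inF (x : T) : Prop := inD x /\ x <> s /\ gstar x <> +oo%E.

End SPDefs.

From Pilot Require Import Defs.
From HB Require Import structures.
From mathcomp Require Import all_boot all_order all_algebra.
From mathcomp Require Import reals constructive_ereal boolp lra.
From Stdlib Require Import ClassicalEpsilon Relation_Operators.
Import Order.TTheory GRing.Theory Num.Theory.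
Set Implicit Arguments. Unset Strict Implicit. Unset Printing Implicit Defensive.
Local Open Scope ring_scope.

(** Along D^+ the distance from s strictly increases, and d(s,a) + d(a,b) <= d(s,b)
whenever a ≺ b.  Let z witness g*(y) < oo, so g*(y) <= d(z,y).  If d(s,u) <= d(s,z),
then d(z,y) <= d(s,y) - d(s,u) < d(s,x) - d(s,u) <= d(u,x) = g(x,u).  Otherwise
d(s,I_s(y)) < d(s,z) < d(s,u); as I_s(y) lies on every s-y path through u, it must
precede u, so u ∈ C(y), and y ≺ x ≺ I_t(u) gives g*(y) <= g(y,u) = d(u,y) < d(u,x)
by the same computation. *)

Section Walks.
Variables (R : realType) (T : finType) (e : rel T) (w : T -> T -> R)
  (d : T -> T -> R).
Hypothesis hd : shortest_dist e w d.

Lemma wlen_cat x p q : wlen w x (p ++ q) = wlen w x p + wlen w (last x p) q.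
Proof. by elim: p x => [|v p IH] x /=; rewrite ?add0r // IH addrA. Qed.

Lemma walk_cat x p y q z : walk e x p y -> walk e y q z -> walk e x (p ++ q) z.
Proof.
rewrite /walk cat_path last_cat => /andP[hp /eqP ->] /andP[hq hz].
by rewrite hp hq.
Qed.

Lemma dist_le_wlen x p y : walk e x p y -> d x y <= wlen w x p.
Proof. by move=> hp; case: (hd x y) => _; apply. Qed.

Lemma dist_triangle a b c : d a c <= d a b + d b c.
Proof.
case: (hd a b) => [[p [hp <-]] _]; case: (hd b c) => [[q [hq <-]] _].
have := dist_le_wlen (walk_cat hp hq); rewrite wlen_cat.
by case/andP: hp => _ /eqP ->.
Qed.

Lemma dist_le_weight u v : e u v -> d u v <= w u v.
Proof.
move=> huv; have := @dist_le_wlen u [:: v] v; rewrite /= addr0; apply.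
by rewrite /walk /= huv eqxx.
Qed.

End Walks.

Section ShortestPathDAG.
Variables (R : realType) (T : finType) (e : rel T) (w : T -> T -> R)
  (d : T -> T -> R) (s t : T).
Hypothesis w_pos : forall u v, e u v -> 0 < w u v.
Hypothesis hd : shortest_dist e w d.

Local Notation "a ≺ b" := (prec e w d s t a b) (at level 70).
Local Notation arc := (Defs.arc e w d s t).
Local Notation dwalk := (dwalk e w d s t).
Local Notation inD := (inD e w d s t).
Local Notation sdom := (sdom e w d s t).
Local Notation Is := (Is e w d s t).
Local Notation It := (It e w d s t).
Local Notation inC := (inC e w d s t).
Local Notation g := (g e w d s t).
Local Notation gstar := (gstar e w d s t).

(* An arc u v lies on a shortest st-path, whose prefix to u and suffix from v
   are then shortest as well. *)
Lemma arc_dist u v : arc u v -> e u v /\ d s u + w u v = d s v.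
Proof.
case=> p [p1 [p2 [[hp hlen] hs]]]; move: hp hlen.
have [q [-> hq]] : exists q, p = q ++ v :: p2 /\ last s q = u.
  case: p1 hs => [|a0 p1] /= [-> ->]; first by exists [::].
  by exists (rcons p1 u); rewrite cat_rcons last_rcons.
rewrite /walk cat_path last_cat hq wlen_cat hq /=.
case/andP => /andP[hpq /andP[huv hp2]] hl hlen.
have hsu : d s u <= wlen w s q.
  by apply: (dist_le_wlen hd); rewrite /walk hpq hq eqxx.
have hvt : d v t <= wlen w v p2 by apply: (dist_le_wlen hd); rewrite /walk hp2 hl.
move: (dist_triangle hd s v t) (dist_triangle hd s u v) (dist_le_weight hd huv).
by split=> //; lra.
Qed.

Lemma prec_dist a b : a ≺ b -> d s a + d a b <= d s b /\ d s a < d s b.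
Proof.
elim=> [u v /arc_dist [huv <-]|u1 u2 u3 _ [? ?] _ [? ?]].
  by move: (dist_le_weight hd huv) (w_pos huv) => ? ?; split; lra.
by move: (dist_triangle hd u1 u2 u3) => ?; split; lra.
Qed.

Lemma dist_lt_of_prec u z y x :
  z ≺ y -> y ≺ x -> d s u <= d s z -> d z y < d u x.
Proof.
move=> /prec_dist[hzy _] /prec_dist[_ hyx] huz.
by have := dist_triangle hd s u x; lra.
Qed.

Lemma dwalk_cat x p q : dwalk x p -> dwalk (last x p) q -> dwalk x (p ++ q).
Proof. by elim: p x => //= v p IH x [hxv hp] hq; split=> //; apply: IH. Qed.

Lemma dwalk_split x p a : dwalk x p -> a \in x :: p ->
  exists p1 p2, [/\ dwalk x p1, last x p1 = a, dwalk a p2 & last a p2 = last x p].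
Proof.
elim: p x => [|v p IH] x /=.
  by move=> _; rewrite inE => /eqP ->; exists [::], [::].
case=> hxv hp; rewrite inE => /orP[/eqP ->|ha]; first by exists [::], (v :: p).
by have [p1 [p2 [? ? ? ?]]] := IH v hp ha; exists (v :: p1), p2.
Qed.

Lemma dwalk_prec x p a : dwalk x p -> a \in p -> x ≺ a.
Proof.
elim: p x => //= v p IH x [hxv hp]; rewrite inE => /orP[/eqP ->|ha].
  exact: t_step.
by apply: t_trans (IH _ hp ha); apply: t_step.
Qed.

Lemma prec_dwalk a b : a ≺ b -> exists q, dwalk a q /\ last a q = b.
Proof.
elim=> [u v huv|u1 u2 u3 _ [q1 [h1 <-]] _ [q2 [h2 <-]]]; first by exists [:: v].
by exists (q1 ++ q2); rewrite last_cat; split=> //; apply: dwalk_cat.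
Qed.

Lemma sp_walk_dwalk p : sp_walk e w d s t p -> dwalk s p.
Proof.
move=> hp; suff : forall r p1 x, s :: p = p1 ++ x :: r -> dwalk x r.
  exact: (fun H => H p [::] s erefl).
elim=> [//|v r IH] p1 x hs /=; split; first by exists p, p1, r.
by apply: (IH (rcons p1 x)); rewrite cat_rcons.
Qed.

Lemma inD_dwalk z : inD z -> exists q, dwalk s q /\ last s q = z.
Proof.
case=> p [hp hz].
by have [q [_ [hq hl _ _]]] := dwalk_split (sp_walk_dwalk hp) hz; exists q.
Qed.

Lemma prec_inD a b : a ≺ b -> inD a.
Proof.
elim=> // u v [p [p1 [p2 [hp hs]]]].
by exists p; rewrite hs mem_cat inE eqxx orbT.
Qed.

(* Every vertex after the junction point is strictly farther from s. *)
Lemma sdom_mem_prefix y v P Q : sdom y v -> dwalk s P ->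
  dwalk (last s P) Q -> last (last s P) Q = y -> d s v <= d s (last s P) ->
  v \in s :: P.
Proof.
move=> [_ hv] hP hQ hy hvP.
have := hv (P ++ Q) (dwalk_cat hP hQ); rewrite last_cat hy -cat_cons mem_cat.
case/(_ erefl)/orP=> // /(dwalk_prec hQ)/prec_dist[_].
by rewrite ltNge hvP.
Qed.

Lemma sdom_prec y v u : sdom y v -> u ≺ y -> d s v < d s u -> v ≺ u.
Proof.
move=> hv huy hvu.
have [P [hP hPu]] := inD_dwalk (prec_inD huy).
have [Q [hQ hQy]] := prec_dwalk huy.
have hvP : v \in s :: P.
  by apply: (sdom_mem_prefix hv hP (Q := Q)); rewrite hPu //; apply: ltW.
have [P1 [P2 [_ _ hP2 hlP2]]] := dwalk_split hP hvP.
rewrite -hPu -hlP2; apply: (dwalk_prec hP2).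
have := mem_last v P2; rewrite inE => /orP[/eqP hlast|//].
by move: hvu; rewrite -hPu -hlP2 hlast ltxx.
Qed.

(* The s-dominator of y farthest from s is the immediate one. *)
Lemma Is_sdom y : inD y -> y <> s -> sdom y (Is y).
Proof.
move=> hy hys; suff [a ha] : exists a, is_Is e w d s t y a.
  by case: (epsilon_spec (inhabits y) _ (ex_intro _ a ha)).
have hs : sdom y s by split=> [/esym//|P _ _]; apply: mem_head.
have [a /asboolP ha amax] :=
  @arg_maxP _ _ _ s (fun v => `[< sdom y v >]) (d s) (asboolT hs).
exists a; split=> // v hv hva; split=> // P hP hPa.
have [q [hq hqy]] := inD_dwalk hy.
have [_ [Q [_ _ hQ hQy]]] := dwalk_split hq (ha.2 q hq hqy).
apply: (sdom_mem_prefix hv hP (Q := Q)); rewrite hPa ?hQy //.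
by apply: amax; apply/asboolP.
Qed.

Lemma g_fin x y : inC x y /\ x ≺ It y -> g x y = (d y x)%:E.
Proof. by rewrite /Defs.g; case: excluded_middle_informative. Qed.

Lemma g_pinfty x y : ~ (inC x y /\ x ≺ It y) -> g x y = +oo%E.
Proof. by rewrite /Defs.g; case: excluded_middle_informative. Qed.

Lemma gstar_le x y : (gstar x <= g x y)%E.
Proof. exact: bigmin_le. Qed.

Lemma gstar_witness x : gstar x <> +oo%E -> exists y, inC x y /\ x ≺ It y.
Proof.
move=> hx; apply: NNPP => hno; apply: hx.
apply: (big_ind (fun v : \bar R => v = +oo%E)) => [//|a b -> ->|y _].
  exact: minxx.
by apply: g_pinfty => hy; apply: hno; exists y.
Qed.

End ShortestPathDAG.

Theorem lemma7 (R : realType) (T : finType) (e : rel T) (w : T -> T -> R)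
  (d : T -> T -> R) (s t : T)
  (e_sym : symmetric e) (e_irr : irreflexive e)
  (e_conn : forall u v, connect e u v)
  (w_sym : forall u v, w u v = w v u)
  (w_pos : forall u v, e u v -> 0 < w u v)
  (hd : shortest_dist e w d)
  (x y : T)
  (hx : inD e w d s t x) (hy : inD e w d s t y)
  (hyx : prec e w d s t y x) (hyF : inF e w d s t y) :
  forall u : T, prec e w d s t u y ->
    (gstar e w d s t y < g e w d s t x u)%E.
Proof.
move=> u huy; have [_ [hys hgy]] := hyF.
have [hgx|hno] := classic (inC e w d s t x u /\
                          prec e w d s t x (It e w d s t u)).
  rewrite g_fin //.
  have [z [[hIz hzy] hyIz]] := gstar_witness hgy.
  have [huz|hzu] := lerP (d s u) (d s z).
    apply: le_lt_trans (gstar_le e w d s t y z) _.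
    by rewrite g_fin // lte_fin (dist_lt_of_prec w_pos hd hzy hyx huz).
  have hIu : prec e w d s t (Is e w d s t y) u.
    apply: (sdom_prec w_pos hd (Is_sdom w_pos hd hy hys) huy).
    exact: lt_trans (prec_dist w_pos hd hIz).2 hzu.
  apply: le_lt_trans (gstar_le e w d s t y u) _.
  rewrite g_fin; last by split; [split | apply: t_trans hyx hgx.2].
  by rewrite lte_fin (dist_lt_of_prec w_pos hd huy hyx (lexx _)).
by rewrite g_pinfty // ltey; apply/eqP.
Qed.
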